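(* Let $G$ be the Halin graph built from the tree $T$ consisting of a centre $v_0$ adjacent to four vertices $v_1,v_2,v_3,v_4$, each $v_i$ having exactly two further neighbours (leaves) $v_{i1},v_{i2}$, with the eight leaves joined by the cycle $v_{11}v_{12}v_{21}v_{22}v_{31}v_{32}v_{41}v_{42}v_{11}$. For each edge $vw$ let $L(vw)=\{1,2,\ldots,\max(\deg(v),\deg(w))\}$ (so the four edges at $v_0$ get $\{1,2,3,4\}$ and all other edges get $\{1,2,3\}$). Then $G$ has no $L$-edge-colouring. Consequently the constant $4$ in the hypothesis $|L(vw)|\ge\max(\deg(v),\deg(w),4)$ of the list-colouring lemma for Halin graphs cannot be removed.
   Context: An $L$-edge-colouring is a map $\mathcal{C}$ on $E(G)$ with $\mathcal{C}(e)\in L(e)$ for every edge $e$ and with edges sharing an endpoint receiving different colours. A Halin graph is obtained by taking a planar embedding of a tree with no vertices of degree $2$ and adding a cycle through all its leaves in the cyclic order of the embedding. *)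

From mathcomp Require Import all_boot.
Set Implicit Arguments. Unset Strict Implicit. Unset Printing Implicit Defensive.

(* Vertices of the Halin graph G: 'I_13 with the numbering
   0 = v0 (centre); 1,2,3,4 = v1..v4;
   leaves v_{i1} = 3 + 2i, v_{i2} = 4 + 2i, i.e.
   v11=5, v12=6, v21=7, v22=8, v31=9, v32=10, v41=11, v42=12. *)
Definition V := 'I_13.

Definition halin_edges : seq (nat * nat) :=
  [:: (0,1); (0,2); (0,3); (0,4);
      (1,5); (1,6); (2,7); (2,8); (3,9); (3,10); (4,11); (4,12);
      (5,6); (6,7); (7,8); (8,9); (9,10); (10,11); (11,12); (12,5)].

Definition adj (u v : V) : bool :=
  ((nat_of_ord u, nat_of_ord v) \in halin_edges) ||
  ((nat_of_ord v, nat_of_ord u) \in halin_edges).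

Definition deg (v : V) : nat := #|[set w : V | adj v w]|.

Definition L (v w : V) : pred nat := fun k => (1 <= k <= maxn (deg v) (deg w)).

(* An L-edge-colouring: a colour for each edge (given as a function on
   ordered adjacent pairs that is symmetric, i.e. a function on E(G)),
   with colours from the lists and adjacent edges coloured differently. *)
Definition L_edge_colouring (c : V -> V -> nat) : Prop :=
  [/\ (forall u v, adj u v -> c u v = c v u),
      (forall u v, adj u v -> c u v \in L u v) &
      (forall u v w, adj u v -> adj u w -> v != w -> c u v != c u w)].

From mathcomp Require Import all_boot zify.
Set Implicit Arguments. Unset Strict Implicit. Unset Printing Implicit Defensive.

(* Every vertex other than v0 has degree 3, so every edge not at v0 gets a
   colour from {1,2,3}, and at any vertex other than v0 the three edges use
   each of these colours once. Along the rim this forces the edges v_(i+1) v_(i+1)2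
   and v_i v_i1 to have the same colour a_i; so v_i sees the colours
   {a_i, a_(i-1)}, and (a_i) is a proper 3-colouring of a 4-cycle. Hence
   a_(i-1) = a_(i+1) for some i, and also for i+2. Then v_i and v_(i+1) see the
   same two colours, which v0 v_i and v0 v_(i+1) must both avoid, so one of
   them is coloured 4; the same holds for v_(i+2) and v_(i+3), and two edges at
   v0 get colour 4. *)

(* [n %% 13] rather than [inord n], so that adjacency and degrees of concrete
   vertices evaluate by computation. *)
Definition vx (n : nat) : V := Ordinal (ltn_pmod n (isT : 0 < 13)).

(* [hub j] is v_(j+1), with leaves [leaf1 j] = v_(j+1)1 and [leaf2 j] = v_(j+1)2;
   the index j is read mod 4. *)
Definition centre : V := vx 0.
Definition hub (j : nat) : V := vx (1 + j %% 4).
Definition leaf1 (j : nat) : V := vx (5 + (j %% 4).*2).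
Definition leaf2 (j : nat) : V := vx (6 + (j %% 4).*2).

Lemma vx_val (v : V) : vx v = v.
Proof. by apply: val_inj; rewrite /= modn_small. Qed.

Lemma adj_sym u v : adj u v = adj v u.
Proof. by rewrite /adj orbC. Qed.

Lemma degE v : deg v = count (fun n => adj v (vx n)) (iota 0 13).
Proof.
rewrite /deg cardsE cardE /enum_mem size_filter -enumT -val_enum_ord count_map.
by apply: eq_count => w; rewrite /= vx_val.
Qed.

Lemma deg_centre : deg centre = 4.
Proof. by rewrite degE. Qed.

Lemma deg_noncentre v : v != centre -> deg v = 3.
Proof.
have /allP/(_ (val v)) : all (fun m => (m == 0) ||
    (count (fun n => adj (vx m) (vx n)) (iota 0 13) == 3)) (iota 0 13) by [].
rewrite mem_iota ltn_ord vx_val -degE => /(_ isT) /orP[/eqP v0 | /eqP //].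
by rewrite (_ : v = centre) ?eqxx //; apply: val_inj.
Qed.

Definition star (u v w x : V) : bool :=
  [&& adj u v, adj u w, adj u x & uniq [:: v; w; x]].

Lemma mod4_succ j : j.+1 %% 4 = (j %% 4).+1 %% 4.
Proof. by rewrite -addn1 -modnDml addn1. Qed.

Lemma mod4_cases j : [|| j %% 4 == 0, j %% 4 == 1, j %% 4 == 2 | j %% 4 == 3].
Proof. by case: (j %% 4) (ltn_pmod j (isT : 0 < 4)) => [|[|[|[|]]]]. Qed.

Local Ltac by_residue_mod4 j :=
  rewrite /hub /leaf1 /leaf2 ?(mod4_succ j) -?(modnDml j 3 4);
  by case/or4P: (mod4_cases j) => /eqP ->.

Lemma hub_star j : star (hub j) centre (leaf1 j) (leaf2 j).
Proof. by_residue_mod4 j. Qed.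

Lemma leaf1_star j : star (leaf1 j) (hub j) (leaf2 j) (leaf2 (j + 3)).
Proof. by_residue_mod4 j. Qed.

Lemma leaf2_star j : star (leaf2 j) (hub j) (leaf1 j) (leaf1 j.+1).
Proof. by_residue_mod4 j. Qed.

Lemma hub_neq_centre j : hub j != centre.
Proof. by_residue_mod4 j. Qed.

Lemma leaf1_neq_centre j : leaf1 j != centre.
Proof. by_residue_mod4 j. Qed.

Lemma leaf2_neq_centre j : leaf2 j != centre.
Proof. by_residue_mod4 j. Qed.

Definition neq_centre := (hub_neq_centre, leaf1_neq_centre, leaf2_neq_centre).

Lemma leaf2_add4 j : leaf2 (j + 4) = leaf2 j.
Proof. by rewrite /leaf2 modnDr. Qed.

Lemma hub_eq_mod4 j k : hub j = hub k -> j %% 4 = k %% 4.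
Proof. by move/(congr1 val) => /=; lia. Qed.

Lemma sum_distinct_le3 x y z : 1 <= x <= 3 -> 1 <= y <= 3 -> 1 <= z <= 3 ->
  x != y -> x != z -> y != z -> x + y + z = 6.
Proof. lia. Qed.

Lemma pair_avoiders_hit_4 p q e e' : 1 <= p <= 3 -> 1 <= q <= 3 ->
  1 <= e <= 4 -> 1 <= e' <= 4 -> p != q ->
  e != p -> e != q -> e' != p -> e' != q -> e != e' -> (e == 4) || (e' == 4).
Proof. lia. Qed.

Lemma proper_3colouring_C4_opposite (f : nat -> nat) :
  (forall j, 1 <= f j <= 3) -> (forall j, f j.+1 != f j) -> f 4 = f 0 ->
  f 0 = f 2 \/ f 1 = f 3.
Proof.
move=> rng neq f40; have := rng 0; have := rng 1; have := rng 2; have := rng 3.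
have := neq 0; have := neq 1; have := neq 2; have := neq 3; rewrite f40; lia.
Qed.

Section Colouring.

Variable c : V -> V -> nat.
Hypothesis col : L_edge_colouring c.

Definition spoke1 j := c (hub j) (leaf1 j).
Definition spoke2 j := c (hub j) (leaf2 j).
Definition centre_colour j := c centre (hub j).

Lemma colour_sym u v : adj u v -> c u v = c v u.
Proof. by case: col => sym _ _ /sym. Qed.

Lemma colour_range u v : adj u v -> 1 <= c u v <= maxn (deg u) (deg v).
Proof. by case: col => _ lst _ /lst. Qed.

Lemma colour_le3 u v : adj u v -> u != centre -> v != centre -> 1 <= c u v <= 3.
Proof. by move=> uv u0 v0; have := colour_range uv; rewrite !deg_noncentre. Qed.

Lemma colour_le4 u v : adj u v -> 1 <= c u v <= 4.
Proof.
have deg_le4 w : deg w <= 4.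
  by case: (w =P centre) => [->|/eqP/deg_noncentre ->]; rewrite ?deg_centre.
move/colour_range => /andP[-> le]; apply: leq_trans le _.
by rewrite geq_max !deg_le4.
Qed.

Lemma star_colours_neq u v w x : star u v w x ->
  [/\ c u v != c u w, c u v != c u x & c u w != c u x].
Proof.
case: col => _ _ prp /and4P[uv uw ux]; rewrite /= !inE !negb_or !andbT.
by case/andP=> /andP[vw vx'] wx; split; apply: prp.
Qed.

Lemma star_colour_sum u v w x : star u v w x ->
  [&& u != centre, v != centre, w != centre & x != centre] ->
  c u v + c u w + c u x = 6.
Proof.
move=> st /and4P[u0 v0 w0 x0]; case/and4P: (st) => uv uw ux _.
case: (star_colours_neq st) => vw vx' wx.
by apply: sum_distinct_le3 vw vx' wx; apply: colour_le3.
Qed.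

Lemma hub_spokes_le3 j : 1 <= spoke1 j <= 3 /\ 1 <= spoke2 j <= 3.
Proof.
case/and4P: (hub_star j) => _ hl1 hl2 _.
by split; apply: colour_le3; rewrite ?neq_centre.
Qed.

Lemma inner_rim_sum j : c (leaf1 j) (leaf2 j) + spoke1 j + spoke2 j = 6.
Proof.
case/and4P: (leaf1_star j) => l1h l12 _ _; case/and4P: (leaf2_star j) => l2h _ _ _.
have [_ _ s12] := star_colours_neq (hub_star j).
have [s1r _ _] := star_colours_neq (leaf1_star j).
have [s2r _ _] := star_colours_neq (leaf2_star j).
rewrite (colour_sym l1h) in s1r; rewrite (colour_sym l2h) -(colour_sym l12) in s2r.
have r_le3 : 1 <= c (leaf1 j) (leaf2 j) <= 3.
  by apply: colour_le3; rewrite ?neq_centre.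
have [] := hub_spokes_le3 j; rewrite /spoke1 /spoke2; lia.
Qed.

Lemma spoke_shift j : spoke2 j.+1 = spoke1 j.
Proof.
have := inner_rim_sum j; have := inner_rim_sum j.+1.
have := star_colour_sum (leaf2_star j); have := star_colour_sum (leaf1_star j.+1).
rewrite addSnnS leaf2_add4 !neq_centre => /(_ isT) out1 /(_ isT) out2.
case/and4P: (leaf1_star j.+1) => l1h _ l1l _; case/and4P: (leaf2_star j) => l2h l21 _ _.
rewrite addSnnS leaf2_add4 in l1l; rewrite (colour_sym l1h) (colour_sym l1l) in out1.
rewrite (colour_sym l2h) (colour_sym l21) in out2.
rewrite /spoke1 /spoke2; lia.
Qed.

Lemma spoke1_succ_neq j : spoke1 j.+1 != spoke1 j.
Proof. by have [_ _] := star_colours_neq (hub_star j.+1); rewrite -/(spoke2 _) spoke_shift. Qed.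

Lemma centre_colour_le4 j : 1 <= centre_colour j <= 4.
Proof. by case/and4P: (hub_star j) => hc _ _ _; apply: colour_le4; rewrite adj_sym. Qed.

Lemma centre_colour_avoids j :
  centre_colour j != spoke1 j /\ centre_colour j != spoke2 j.
Proof.
case/and4P: (hub_star j) => hc _ _ _; have [n1 n2 _] := star_colours_neq (hub_star j).
by rewrite /centre_colour -(colour_sym hc).
Qed.

Lemma centre_colour_inj j k : centre_colour j = centre_colour k -> j %% 4 = k %% 4.
Proof.
case: (hub j =P hub k) => [/hub_eq_mod4 // | /eqP hjk].
case/and4P: (hub_star j) => hcj _ _ _; case/and4P: (hub_star k) => hck _ _ _.
case: col => _ _ prp; rewrite adj_sym in hcj; rewrite adj_sym in hck.
by move/eqP; rewrite (negbTE (prp _ _ _ hcj hck hjk)).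
Qed.

(* Hubs j+1 and j+2 then both see the colours spoke1 j and spoke1 j.+1. *)
Lemma centre_four_of_twin j :
  spoke1 j.+2 = spoke1 j -> (centre_colour j.+1 == 4) || (centre_colour j.+2 == 4).
Proof.
move=> twin; have [[p_le3 _] [q_le3 _]] := (hub_spokes_le3 j.+1, hub_spokes_le3 j).
have [e1p e1q] := centre_colour_avoids j.+1; have [e2q e2p] := centre_colour_avoids j.+2.
rewrite spoke_shift in e1q; rewrite twin in e2q; rewrite spoke_shift in e2p.
apply: (pair_avoiders_hit_4 p_le3 q_le3 (centre_colour_le4 _) (centre_colour_le4 _)
  (spoke1_succ_neq j) e1p e1q e2p e2q).
by apply/eqP => /centre_colour_inj; lia.
Qed.

Lemma centre_four_unique j k :
  centre_colour j == 4 -> centre_colour k == 4 -> j %% 4 = k %% 4.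
Proof. by move=> /eqP ej /eqP ek; apply: centre_colour_inj; rewrite ej ek. Qed.

End Colouring.

Theorem mainTheorem11 : ~ exists c : V -> V -> nat, L_edge_colouring c.
Proof.
case=> c col.
have [s02 | s13] : spoke1 c 0 = spoke1 c 2 \/ spoke1 c 1 = spoke1 c 3.
  by apply: proper_3colouring_C4_opposite => // j;
    [case: (hub_spokes_le3 col j) | exact: spoke1_succ_neq].
- case/orP: (centre_four_of_twin col (j := 0) (esym s02)) => e;
  case/orP: (centre_four_of_twin col (j := 2) s02) => e';
  by move/eqP: (centre_four_unique col e e').
- case/orP: (centre_four_of_twin col (j := 1) (esym s13)) => e;
  case/orP: (centre_four_of_twin col (j := 3) s13) => e';
  by move/eqP: (centre_four_unique col e e').
Qed.
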